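(* Let $\mathcal T$ be a tangle of order $k$ in a connectivity system $(E,\lambda)$ and let $\mathcal S$ be a tree compatible set. Let $n\geq 3$, and let $\Phi=(P_1,\ldots, P_n)$ be an $\mathcal{S}$-tight $k$-flower in $\mathcal{T}$. Let $(R,G)$ be a $\Phi$-minimum $(k,\mathcal{S})$-separation that does not conform with $\Phi$. If $\Phi$ has one $(R,G)$-strong petal, then every petal of $\Phi$ is $(R,G)$-strong.
   Context: A connectivity system is a pair $(E,\lambda)$ with $E$ finite and $\lambda$ an integer-valued symmetric submodular function on subsets of $E$. $X$ is $k$-separating if $\lambda(X)\le k$; a $k$-separation is an unordered partition $(X,E-X)$ with $\lambda(X)\le k$. A tangle of order $k$ is a collection $\mathcal T$ of subsets of $E$ with (T1) $\lambda(A)<k$ for $A\in\mathcal T$; (T2) if $\lambda(A)\le k-1$ then $A$ or $E-A$ is in $\mathcal T$; (T3) $A\cup B\cup C\ne E$ for $A,B,C\in\mathcal T$; (T4) $E-\{e\}\notin\mathcal T$. A set is $\mathcal T$-weak if contained in a member of $\mathcal T$, otherwise $\mathcal T$-strong; partitions/$k$-separations are $\mathcal T$-strong if all parts are. A $\mathcal T$-strong $k$-separating $X$ is fully closed if $X\cup Y$ is not $k$-separating for every nonempty $\mathcal T$-weak $Y\subseteq E-X$; $\mathrm{fcl}_{\mathcal T}(X)$ is the intersection of all fully closed $k$-separating sets containing $X$. $\mathcal T$-strong $k$-separations $(X,Y),(X',Y')$ are $\mathcal T$-equivalent if $\{\mathrm{fcl}_{\mathcal T}(X),\mathrm{fcl}_{\mathcal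 T}(Y)\}=\{\mathrm{fcl}_{\mathcal T}(X'),\mathrm{fcl}_{\mathcal T}(Y')\}$. $X$ is $\mathcal T$-sequential if it is $k$-separating, $E-X$ is $\mathcal T$-strong and $\mathrm{fcl}_{\mathcal T}(E-X)=E$. Let $\mathcal S$ be a set of non-$\mathcal T$-sequential $k$-separating sets with $\mathcal T$-strong complements; a $(k,\mathcal S)$-separation is a $k$-separation $(X,E-X)$ with $X,E-X\in\mathcal S$. $\mathcal S$ is tree compatible if (S1) any $\mathcal T$-strong $k$-separation $\mathcal T$-equivalent to a $(k,\mathcal S)$-separation is a $(k,\mathcal S)$-separation, and (S2) if $X\in\mathcal S$ and $(Y,E-Y)$ is a $\mathcal T$-strong $k$-separation with $X\subseteq Y$ then $Y\in\mathcal S$. A $k$-flower in $\mathcal T$ is a $\mathcal T$-strong partition $(P_1,\dots,P_n)$ of $E$ with $P_i$ and $P_i\cup P_{i+1}$ $k$-separating for all $i$ (mod $n$); it displays $(X,E-X)$ if $X$ is a union of petals. $\Phi_1\preccurlyeq_{\mathcal S}\Phi_2$ if each $(k,\mathcal S)$-separation displayed by $\Phi_1$ is $\mathcal T$-equivalent to one displayed by $\Phi_2$; equivalence means both directions. $\Phi$ is $\mathcal S$-tight if it is not equivalent to a $k$-flower with fewer petals. A $\mathcal T$-strong $k$-separation $(R,G)$ conforms with $\Phi$ if it is $\mathcal T$-equivalent to a $k$-separation displayed by $\Phi$ or to a $k$-separation $(R',G')$ with $R'$ or $G'$ contained in a petal. $(R,G)$ crosses a set $P$ if $P\cap R$ and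 $P\cap G$ are both nonempty; it strongly crosses $P$ if both are $\mathcal T$-strong, and weakly crosses $P$ if both are $\mathcal T$-weak. A $\mathcal T$-strong $k$-separation is $\Phi$-minimum if, among all $k$-separations $\mathcal T$-equivalent to it, it crosses the minimum number of petals of $\Phi$. A petal is $(R,G)$-strong if it is not crossed or is strongly crossed by $(R,G)$, and $(R,G)$-weak if it is weakly crossed. *)

From mathcomp Require Import all_boot all_order all_algebra.
Set Implicit Arguments. Unset Strict Implicit. Unset Printing Implicit Defensive.
Import Order.TTheory GRing.Theory Num.Theory.
Local Open Scope ring_scope.

Section Conn.
Variable E : finType.
Variable lam : {set E} -> int.
Variable k : int.
Variable T : {set {set E}}.

Definition connectivity_system : Prop :=
  (forall X : {set E}, lam X = lam (~: X)) /\
  (forall X Y : {set E}, lam (X :|: Y) + lam (X :&: Y) <= lam X + lam Y).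

Definition is_tangle : Prop :=
  [/\ (forall A, A \in T -> lam A < k),
      (forall A, lam A <= k - 1 -> (A \in T) \/ (~: A \in T)),
      (forall A B C, A \in T -> B \in T -> C \in T -> A :|: B :|: C != setT)
    & (forall e : E, ~: [set e] \notin T)].

Definition ksep (X : {set E}) : bool := lam X <= k.

Definition weak (Y : {set E}) : bool := [exists A in T, Y \subset A].
Definition strong (Y : {set E}) : bool := ~~ weak Y.

(* (X, E - X) is a T-strong k-separation *)
Definition strong_ksep (X : {set E}) : bool :=
  [&& ksep X, strong X & strong (~: X)].

Definition fully_closed (X : {set E}) : bool :=
  [&& strong X, ksep X &
      [forall Y : {set E},
         ((Y \subset ~: X) && (Y != set0) && weak Y) ==> ~~ ksep (X :|: Y)]].

Definition fcl (X : {set E}) : {set E} :=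
  \bigcap_(F | fully_closed F && (X \subset F)) F.

Definition tequiv (X X' : {set E}) : Prop :=
  [/\ strong_ksep X, strong_ksep X' &
      [set fcl X; fcl (~: X)] = [set fcl X'; fcl (~: X')]].

Definition sequential (X : {set E}) : bool :=
  [&& ksep X, strong (~: X) & fcl (~: X) == setT].

Variable S : {set {set E}}.

Definition S_admissible : Prop :=
  forall X, X \in S -> [/\ ksep X, ~~ sequential X & strong (~: X)].

Definition kS_sep (X : {set E}) : bool :=
  [&& ksep X, X \in S & ~: X \in S].

Definition tree_compatible : Prop :=
  [/\ S_admissible,
      (forall X X', kS_sep X' -> tequiv X X' -> kS_sep X)
    & (forall X Y, X \in S -> strong_ksep Y -> X \subset Y -> Y \in S)].

(* flowers, given as maps 'I_n -> {set E} (petals P_1 .. P_n, indices mod n) *)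
Definition kflower (n : nat) (P : 'I_n -> {set E}) : Prop :=
  [/\ (forall i j, i != j -> [disjoint P i & P j]),
      \bigcup_(i < n) P i = setT,
      (forall i, strong (P i))
    & (forall i, ksep (P i) && ksep (P i :|: P (ordS i)))].

Definition displays (n : nat) (P : 'I_n -> {set E}) (X : {set E}) : bool :=
  [exists I : {set 'I_n}, X == \bigcup_(i in I) P i].

Definition flower_le (n m : nat) (P : 'I_n -> {set E}) (Q : 'I_m -> {set E}) : Prop :=
  forall X, kS_sep X -> displays P X -> exists2 Y, displays Q Y & tequiv X Y.

Definition flower_equiv (n m : nat) (P : 'I_n -> {set E}) (Q : 'I_m -> {set E}) : Prop :=
  flower_le P Q /\ flower_le Q P.

Definition S_tight (n : nat) (P : 'I_n -> {set E}) : Prop :=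
  ~ exists m (Q : 'I_m -> {set E}), [/\ (m < n)%N, kflower Q & flower_equiv P Q].

Definition conforms (n : nat) (P : 'I_n -> {set E}) (R : {set E}) : Prop :=
  (exists2 X : {set E}, displays P X & tequiv R X) \/
  (exists2 X : {set E}, (exists i, (X \subset P i) || (~: X \subset P i)) & tequiv R X).

Definition crosses (R Q : {set E}) : bool :=
  (Q :&: R != set0) && (Q :&: ~: R != set0).
Definition strongly_crosses (R Q : {set E}) : bool :=
  [&& crosses R Q, strong (Q :&: R) & strong (Q :&: ~: R)].
Definition weakly_crosses (R Q : {set E}) : bool :=
  [&& crosses R Q, weak (Q :&: R) & weak (Q :&: ~: R)].

Definition ncross (n : nat) (P : 'I_n -> {set E}) (R : {set E}) : nat :=
  #|[set i | crosses R (P i)]|.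

Definition phi_minimum (n : nat) (P : 'I_n -> {set E}) (R : {set E}) : Prop :=
  strong_ksep R /\ (forall R', tequiv R' R -> (ncross P R <= ncross P R')%N).

Definition petal_strong (R Q : {set E}) : bool :=
  ~~ crosses R Q || strongly_crosses R Q.
Definition petal_weak (R Q : {set E}) : bool := weakly_crosses R Q.

End Conn.

(* Suppose some petal is (R, G)-strong and some is not; going around the cycle we find
   a strong petal P_i followed by a petal P_j, j = i + 1, that is not.  By Φ-minimality
   P_j is weakly crossed: cutting a T-weak piece of a petal off R would otherwise give a
   T-equivalent separation crossing fewer petals.  Hence both parts of P_j are T-weak
   and fcl (E - P_j) = E.  If P_i is not crossed, the same minimality argument on the
   side containing P_i makes the other part of P_j strong.  If P_i is strongly crossed,
   uncrossing R with P_i and P_i ∪ P_j shows that either every displayed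
   (k, S)-separation with P_i and P_j on opposite sides is T-equivalent to the one with
   P_j moved across, so Φ is equivalent to the flower merging P_i and P_j, or every
   displayed (k, S)-separation with P_i on one side is T-equivalent to (P_i, E - P_i),
   so Φ is equivalent to a flower with two petals.  As n >= 3 both contradict
   S-tightness. *)

From Pilot Require Import Defs.
From mathcomp Require Import all_boot all_order all_algebra zify.
Set Implicit Arguments. Unset Strict Implicit. Unset Printing Implicit Defensive.
Import Order.TTheory GRing.Theory Num.Theory.
Local Open Scope ring_scope.

Ltac set_cases :=
  repeat match goal with |- context [?x \in ?A] => case: (x \in A) end;
  rewrite /=; intros;
  repeat match goal with H : is_true true -> _ |- _ => specialize (H isT) end;
  try done.

Lemma ordS_val n (i : 'I_n) : nat_of_ord (ordS i) = if i.+1 == n then 0%N else i.+1.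
Proof.
case: eqP => [e|ne]; first by rewrite /= e modnn.
by rewrite /= modn_small //; have := ltn_ord i; lia.
Qed.

Lemma ordS_neq n (i : 'I_n) : (2 <= n)%N -> ordS i != i.
Proof.
move=> n2; rewrite -(inj_eq (@ord_inj n)) ordS_val; apply/eqP; have := ltn_ord i.
by case: (i.+1 == n) /eqP; lia.
Qed.

Lemma ordSS_neq n (i : 'I_n) : (3 <= n)%N -> ordS (ordS i) != i.
Proof.
move=> n3; rewrite -(inj_eq (@ord_inj n)) !ordS_val; apply/eqP; have := ltn_ord i.
by case: (i.+1 == n) /eqP; case: eqP; lia.
Qed.

Lemma lift_ordS n (j : 'I_n) (t : 'I_n.-1) :
  lift j (ordS t) = if ordS (lift j t) == j then ordS j else ordS (lift j t).
Proof.
have lift_val x : nat_of_ord (lift j x) = bump j x by [].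
apply: ord_inj; rewrite -(inj_eq (@ord_inj n)) fun_if !ordS_val !lift_val ordS_val /bump.
have := ltn_ord t; have := ltn_ord j.
case: (val j <= val t)%N / ssrnat.leP; case: ssrnat.leP => /=;
  repeat case: eqP => /=; lia.
Qed.

Lemma exists_ordS_switch n (p : pred 'I_n) i j :
  p i -> ~~ p j -> exists t, p t && ~~ p (ordS t).
Proof.
move=> pi npj; apply/existsP; apply: contraNT npj => /existsPn noswitch.
have closed t : p t -> p (ordS t) by move=> pt; move: (noswitch t); rewrite pt negbK.
have val_iter d : val (iter d (@ordS n) i) = ((i + d) %% n)%N.
  elim: d => [|d IH] /=; first by rewrite addn0 modn_small.
  by rewrite IH addnS -addn1 modnDml addn1.
have -> : j = iter (j + n - i) (@ordS n) i.
  apply: val_inj; rewrite val_iter.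
  have -> : (i + (j + n - i) = j + n)%N by have := ltn_ord i; lia.
  by rewrite modnDr modn_small.
by elim: (j + n - i)%N => //= d; apply: closed.
Qed.

(** * Sets displayed by a partition into petals *)

Section Display.
Variable E : finType.
Implicit Types X Y : {set E}.

Definition petal_partition m (Q : 'I_m -> {set E}) : Prop :=
  (forall i j, i != j -> [disjoint Q i & Q j]) /\ (forall x, exists i, x \in Q i).

Lemma kflower_partition lam k T m (Q : 'I_m -> {set E}) :
  kflower lam k T Q -> petal_partition Q.
Proof.
case=> disjQ coverQ _ _; split=> // x.
have : x \in \bigcup_(i < m) Q i by rewrite coverQ inE.
by case/bigcupP => i _ xQi; exists i.
Qed.

Variables (m : nat) (Q : 'I_m -> {set E}).
Hypothesis Q_part : petal_partition Q.

Lemma displaysE X : displays Q X = [forall s, (Q s \subset X) || (Q s \subset ~: X)].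
Proof.
case: Q_part => disjQ coverQ; apply/existsP/forallP => [[I /eqP ->] s|sides].
  have [sI|nsI] := boolP (s \in I); first by rewrite (bigcup_sup _ sI).
  apply/orP; right; rewrite -disjoints_subset; apply/bigcup_disjointP => t tI.
  by apply: disjQ; apply: contraNneq nsI => ->.
exists [set s | Q s \subset X]; apply/eqP/setP => x; apply/idP/bigcupP => [xX|].
  have [s xQs] := coverQ x; exists s => //; rewrite inE.
  by case/orP: (sides s) => // /subsetP/(_ x xQs); rewrite inE xX.
by case=> s; rewrite inE => /subsetP; apply.
Qed.

Lemma displays_side X s : displays Q X -> (Q s \subset X) \/ (Q s \subset ~: X).
Proof. by rewrite displaysE => /forallP/(_ s)/orP. Qed.

Lemma displaysC X : displays Q X -> displays Q (~: X).
Proof. by rewrite !displaysE => /forallP sides; apply/forallP => s; rewrite setCK orbC. Qed.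

Lemma displaysU X Y : displays Q X -> displays Q Y -> displays Q (X :|: Y).
Proof.
rewrite !displaysE => /forallP sX /forallP sY; apply/forallP => s.
case/orP: (sX s) => [QX|QXc]; first by rewrite (subset_trans QX (subsetUl _ _)).
case/orP: (sY s) => [QY|QYc]; first by rewrite (subset_trans QY (subsetUr _ _)).
by rewrite setCU subsetI QXc QYc orbT.
Qed.

Lemma displays_petal s : displays Q (Q s).
Proof.
rewrite displaysE; apply/forallP => t; have [->|ts] := eqVneq t s; first by rewrite subxx.
by case: Q_part => disjQ _; rewrite -disjoints_subset disjQ ?orbT.
Qed.

End Display.

Lemma displays_coarsen (E : finType) m m' (Q : 'I_m -> {set E}) (Q' : 'I_m' -> {set E}) :
  petal_partition Q -> petal_partition Q' ->
  (forall s, exists t, Q s \subset Q' t) -> forall X, displays Q' X -> displays Q X.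
Proof.
move=> Q_part Q'_part coarse X.
rewrite (displaysE Q_part X) (displaysE Q'_part X) => /forallP sides.
apply/forallP => s; have [t sQt] := coarse s.
by case/orP: (sides t) => h; rewrite (subset_trans sQt h) ?orbT.
Qed.

(** * Connectivity, tangles and full closure *)

Section Connectivity.
Variables (E : finType) (lam : {set E} -> int) (k : int) (T : {set {set E}}).
Hypothesis lam_conn : connectivity_system lam.
Hypothesis T_tangle : is_tangle lam k T.

Implicit Types X Y Z M F R Q : {set E}.
Local Notation weak := (weak T).
Local Notation strong := (strong T).
Local Notation ksep := (ksep lam k).
Local Notation fcl := (fcl lam k T).
Local Notation strong_ksep := (strong_ksep lam k T).
Local Notation tequiv := (tequiv lam k T).

Lemma lamC X : lam (~: X) = lam X.
Proof. by case: lam_conn => lamC _; rewrite -lamC. Qed.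

Lemma lam_submod X Y : lam (X :|: Y) + lam (X :&: Y) <= lam X + lam Y.
Proof. by case: lam_conn. Qed.

Lemma lam_setT_le X : lam setT <= lam X.
Proof.
have := lam_submod X (~: X); rewrite setUCr setICr lamC -setCT lamC; lia.
Qed.

Lemma ksepC X : ksep (~: X) = ksep X.
Proof. by rewrite /Defs.ksep lamC. Qed.

Lemma ksepT X : ksep X -> ksep setT.
Proof. by rewrite /Defs.ksep; have := lam_setT_le X; lia. Qed.

Lemma weak_sub X Y : X \subset Y -> weak Y -> weak X.
Proof.
move=> sXY /existsP[A /andP[AT sYA]]; apply/existsP; exists A.
by rewrite AT (subset_trans sXY sYA).
Qed.

Lemma strong_sup X Y : X \subset Y -> strong X -> strong Y.
Proof. by move=> sXY; apply: contra; apply: weak_sub. Qed.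

Lemma lam_ge_strong X : strong X -> strong (~: X) -> k <= lam X.
Proof.
move=> sX sXc; rewrite leNgt; apply/negP => ltXk.
have inT_weak A : A \in T -> weak A.
  by move=> AT; apply/existsP; exists A; rewrite AT subxx.
case: T_tangle => _ T2 _ _; have : lam X <= k - 1 by lia.
by case/T2 => /inT_weak; [apply/negP: sX | apply/negP: sXc].
Qed.

Lemma weak_of_lam_lt X : lam X < k -> strong (~: X) -> weak X.
Proof. by move=> ltXk sXc; apply: contraTT ltXk => sX; rewrite -leNgt lam_ge_strong. Qed.

Lemma ksepU X Y : ksep X -> ksep Y -> k <= lam (X :&: Y) -> ksep (X :|: Y).
Proof. by rewrite /Defs.ksep; have := lam_submod X Y; lia. Qed.

Lemma ksepI X Y : ksep X -> ksep Y -> k <= lam (X :|: Y) -> ksep (X :&: Y).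
Proof. by rewrite /Defs.ksep; have := lam_submod X Y; lia. Qed.

Lemma fully_closed_strongC F : fully_closed lam k T F -> F != setT -> strong (~: F).
Proof.
case/and3P => _ kF /forallP/(_ (~: F)) closedF nT; apply: contraL closedF => wFc.
rewrite subxx wFc setUCr andbT /= negb_imply negbK (ksepT kF) andbT.
by apply: contra nT => /eqP/(congr1 (@setC _)); rewrite setCK setC0 => ->.
Qed.

Lemma fcl_weak_ext X Z :
  strong X -> X \subset Z -> weak (Z :\: X) -> ksep Z -> fcl X = fcl Z.
Proof.
move=> sX sXZ wZX kZ; apply: eq_bigl => F.
case fcF: (fully_closed lam k T F) => //=; apply/idP/idP => [sXF|]; last first.
  exact: subset_trans.
have [->|nT] := eqVneq F setT; first exact: subsetT.
case/and3P: (fcF) => _ kF /forallP/(_ (Z :\: F)); apply: contraLR => nsZF.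
rewrite subDset setUCr subsetT setD_eq0 nsZF /= negb_imply negbK.
have -> : weak (Z :\: F).
  by apply: weak_sub wZX; apply: setDS.
have -> : F :|: Z :\: F = F :|: Z by rewrite setDE setUIr setUCr setIT.
apply: ksepU => //; apply: lam_ge_strong.
  by apply: strong_sup sX; rewrite subsetI sXF.
by apply: strong_sup (fully_closed_strongC fcF nT); rewrite setCS subsetIl.
Qed.

Lemma fcl_weak_ext2 X M Z : strong X -> X \subset M -> M \subset Z ->
  weak (M :\: X) -> weak (Z :\: M) -> ksep M -> ksep Z -> fcl X = fcl Z.
Proof.
move=> sX sXM sMZ wMX wZM kM kZ; rewrite (fcl_weak_ext sX sXM wMX kM).
exact: fcl_weak_ext (strong_sup sXM sX) sMZ wZM kZ.
Qed.

Lemma fclT : fcl setT = setT.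
Proof. by apply/eqP; rewrite eqEsubset subsetT; apply/bigcapsP => F /andP[]. Qed.

Lemma strong_ksepC X : strong_ksep (~: X) = strong_ksep X.
Proof. by rewrite /Defs.strong_ksep ksepC setCK [strong X && _]andbC. Qed.

Lemma strong_ksep_lam X : strong_ksep X -> lam X = k.
Proof.
case/and3P => kX sX sXc; have := lam_ge_strong sX sXc.
by move: kX; rewrite /Defs.ksep; lia.
Qed.

Lemma tequiv_refl X : strong_ksep X -> tequiv X X.
Proof. by split. Qed.

Lemma tequivC X Y : tequiv X Y -> tequiv (~: X) (~: Y).
Proof. by case=> sX sY e; split; rewrite ?strong_ksepC // !setCK setUC e setUC. Qed.

Lemma tequiv_sym X Y : tequiv X Y -> tequiv Y X.
Proof. by case. Qed.

Lemma tequiv_weak_ext X Y : strong_ksep X -> strong_ksep Y ->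
  X \subset Y -> weak (Y :\: X) -> tequiv X Y.
Proof.
move=> sX sY sXY wYX; have /and3P[kX sX' _] := sX; have /and3P[kY _ sYc] := sY.
split; rewrite // (fcl_weak_ext sX' sXY wYX kY).
rewrite -(@fcl_weak_ext (~: Y) (~: X)) ?setCS ?ksepC //.
by rewrite setDE setCK setIC -setDE.
Qed.

(* Two-step version: [Y :\: X] itself need not be T-weak. *)
Lemma tequiv_weak_ext2 X M Y : strong_ksep X -> strong_ksep Y -> ksep M ->
  X \subset M -> M \subset Y -> weak (M :\: X) -> weak (Y :\: M) -> tequiv X Y.
Proof.
move=> sX sY kM sXM sMY wMX wYM.
have /and3P[kX sX' _] := sX; have /and3P[kY _ sYc] := sY.
split; rewrite // (fcl_weak_ext2 sX' sXM sMY wMX wYM kM kY).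
rewrite -(@fcl_weak_ext2 (~: Y) (~: M) (~: X)) ?setCS ?ksepC //.
  by rewrite setDE setCK setIC -setDE.
by rewrite setDE setCK setIC -setDE.
Qed.

Section Flower.
Variable S : {set {set E}}.
Hypothesis S_compat : tree_compatible lam k T S.

Local Notation kS_sep := (kS_sep lam k S).

Lemma kS_sepC X : kS_sep (~: X) = kS_sep X.
Proof. by rewrite /Defs.kS_sep ksepC setCK [(_ \in S) && _]andbC. Qed.

Lemma kS_sep_strong X : kS_sep X -> strong_ksep X.
Proof.
case: S_compat => adm _ _; case/and3P => kX XS XcS.
by case: (adm _ XS) => _ _ sXc; case: (adm _ XcS); rewrite setCK => _ _ sX; apply/and3P.
Qed.

Lemma kS_sep_fcl X : kS_sep X -> fcl X != setT.
Proof.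
move=> kX; have /and3P[_ sX _] := kS_sep_strong kX; case/and3P: kX => _ _ XcS.
case: S_compat => adm _ _; case: (adm _ XcS) => kXc.
by rewrite /sequential setCK kXc sX.
Qed.

Variables (n : nat) (P : 'I_n -> {set E}).
Hypothesis P_flower : kflower lam k T P.
Hypothesis n_ge3 : (3 <= n)%N.

Lemma flower_partition : petal_partition P.
Proof. exact: kflower_partition P_flower. Qed.

Lemma flower_disjoint i j : i != j -> [disjoint P i & P j].
Proof. by case: flower_partition => disjP _; apply: disjP. Qed.

Lemma flower_subC i j : i != j -> P j \subset ~: P i.
Proof. by rewrite -disjoints_subset disjoint_sym; apply: flower_disjoint. Qed.

Lemma flower_cover x : exists i, x \in P i.
Proof. by case: flower_partition. Qed.

Lemma flower_strong i : strong (P i).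
Proof. by case: P_flower. Qed.

Lemma flower_strongC i : strong (~: P i).
Proof.
apply: strong_sup (flower_strong (ordS i)); apply: flower_subC.
by rewrite eq_sym ordS_neq // ltnW.
Qed.

Lemma flower_ksep i : ksep (P i).
Proof. by case: P_flower => _ _ _ /(_ i) /andP[]. Qed.

Lemma flower_ksep2 i : ksep (P i :|: P (ordS i)).
Proof. by case: P_flower => _ _ _ /(_ i) /andP[]. Qed.

Lemma flower_strong_ksep i : strong_ksep (P i).
Proof. by rewrite /Defs.strong_ksep flower_ksep flower_strong flower_strongC. Qed.

Lemma ksep_setT : ksep setT.
Proof. exact: ksepT (flower_ksep (Ordinal (leq_trans (isT : (0 < 3)%N) n_ge3))). Qed.

Lemma flower_ksep3 i : ksep (P i :|: P (ordS i) :|: P (ordS (ordS i))).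
Proof.
set j := ordS i; set l := ordS j.
have -> : P i :|: P j :|: P l = (P i :|: P j) :|: (P j :|: P l).
  by apply/setP => x; rewrite !inE; set_cases.
have meet : (P i :|: P j) :&: (P j :|: P l) = P j.
  rewrite [P i :|: _]setUC -setUIr.
  by rewrite setIC (disjoint_setI0 (flower_disjoint (ordSS_neq _ n_ge3))) setU0.
by rewrite ksepU ?flower_ksep2 // meet lam_ge_strong ?flower_strong ?flower_strongC.
Qed.

(** * Petals crossed by a Φ-minimum separation *)

Lemma crossesC R Q : crosses (~: R) Q = crosses R Q.
Proof. by rewrite /crosses setCK andbC. Qed.

Lemma strongly_crossesC R Q : strongly_crosses T (~: R) Q = strongly_crosses T R Q.
Proof. by rewrite /strongly_crosses crossesC setCK [strong (Q :&: ~: R) && _]andbC. Qed.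

Lemma ncrossC R : ncross P (~: R) = ncross P R.
Proof. by apply: eq_card => s; rewrite !inE crossesC. Qed.

Lemma phi_minimumC R : phi_minimum lam k T P R -> phi_minimum lam k T P (~: R).
Proof.
case=> sR minR; split; first by rewrite strong_ksepC.
move=> R' R'eqv; rewrite ncrossC -(ncrossC R'); apply: minR.
by rewrite -[R]setCK; apply: tequivC.
Qed.

Lemma ncross_ltn R R' j : (forall s, crosses R' (P s) -> crosses R (P s)) ->
  crosses R (P j) -> ~~ crosses R' (P j) -> (ncross P R' < ncross P R)%N.
Proof.
move=> sub crj ncrj; apply: proper_card; apply/properP; split.
  by apply/subsetP => s; rewrite !inE; apply: sub.
by exists j; rewrite !inE.
Qed.

Lemma crosses_setD R j s : s != j -> crosses (R :\: P j) (P s) = crosses R (P s).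
Proof.
move=> sj; have notPj x : x \in P s -> x \in P j = false by apply: disjointFr (flower_disjoint sj).
have e1 : P s :&: (R :\: P j) = P s :&: R.
  by apply/setP => x; rewrite !inE; case xs: (x \in P s); rewrite //= notPj.
have e2 : P s :&: ~: (R :\: P j) = P s :&: ~: R.
  by apply/setP => x; rewrite !inE; case xs: (x \in P s); rewrite //= notPj ?orbF.
by rewrite /crosses e1 e2.
Qed.

(* Were [R :\: P j] k-separating, it would be either T-strong, hence T-equivalent
   to R while crossing fewer petals, or T-weak, making [~: R] T-sequential. *)
Lemma phi_minimum_ksepD R j : kS_sep R -> phi_minimum lam k T P R ->
  crosses R (P j) -> weak (P j :&: R) -> ~~ ksep (R :\: P j).
Proof.
move=> kR [sR minR] crj wPjR; apply/negP => kRD; have /and3P[_ _ sRc] := sR.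
have RcD : ~: R \subset ~: (R :\: P j) by rewrite setCS subsetDl.
have [sD|/negPn wD] := boolP (strong (R :\: P j)); last first.
  have kRc : kS_sep (~: R) by rewrite kS_sepC.
  have /negP := kS_sep_fcl kRc; apply; apply/eqP.
  rewrite -fclT; apply: (@fcl_weak_ext2 _ (~: (R :\: P j))); rewrite ?ksepC ?ksep_setT //.
    by apply: weak_sub wPjR; apply/subsetP => x; rewrite !inE; set_cases.
  by rewrite setTD setCK.
have sksD : strong_ksep (R :\: P j) by rewrite /Defs.strong_ksep kRD sD (strong_sup RcD sRc).
have eqvD : tequiv (R :\: P j) R.
  apply: tequiv_weak_ext sksD sR (subsetDl _ _) _.
  by apply: weak_sub wPjR; apply/subsetP => x; rewrite !inE; set_cases.
have := minR _ eqvD; rewrite leqNgt => /negP; apply; apply: (ncross_ltn (j := j)) => //.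
- by move=> s; have [-> _ //|sj] := eqVneq s j; rewrite crosses_setD.
- by rewrite /crosses setIDA setDIl setDv set0I eqxx.
Qed.

Lemma phi_minimum_lam_lt R j : kS_sep R -> phi_minimum lam k T P R ->
  crosses R (P j) -> weak (P j :&: R) -> lam (P j :&: ~: R) < k.
Proof.
move=> kR minR crj wPjR; rewrite ltNge; apply: contra (phi_minimum_ksepD kR minR crj wPjR).
have /and3P[kR' _ _] := kR; rewrite setDE => lam_ge; apply: ksepI; rewrite ?ksepC ?flower_ksep //.
by rewrite -[R :|: _]setCK setCU setCK setIC lamC.
Qed.

Lemma phi_minimum_weak_petal R j : kS_sep R -> phi_minimum lam k T P R ->
  ~~ petal_strong T R (P j) -> petal_weak T R (P j).
Proof.
move=> kR minR; have /and3P[_ sR sRc] := kS_sep_strong kR.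
rewrite /petal_strong /petal_weak /weakly_crosses /strongly_crosses negb_or negbK.
case/andP => crj; rewrite crj /= /Defs.strong negb_and !negbK => /orP[wPjR|wPjRc].
  rewrite wPjR; apply: weak_of_lam_lt (phi_minimum_lam_lt kR minR crj wPjR) _.
  by apply: strong_sup sR; apply/subsetP => x; rewrite !inE; set_cases.
rewrite wPjRc andbT; apply: weak_of_lam_lt.
  rewrite -[R in P j :&: R]setCK; apply: phi_minimum_lam_lt; rewrite ?kS_sepC ?crossesC ?setCK //.
  exact: phi_minimumC.
by apply: strong_sup sRc; apply/subsetP => x; rewrite !inE; set_cases.
Qed.

Lemma phi_minimum_next_strong R i : kS_sep R -> phi_minimum lam k T P R ->
  P i \subset R -> crosses R (P (ordS i)) -> strong (P (ordS i) :&: ~: R).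
Proof.
move=> kR minR PiR crj; apply/negP => wPjRc; have /and3P[kR' _ sRc] := kS_sep_strong kR.
have := phi_minimum_ksepD (j := ordS i) (R := ~: R); rewrite kS_sepC crossesC.
move=> /(_ kR (phi_minimumC minR) crj wPjRc)/negP; apply.
have -> : ~: R :\: P (ordS i) = ~: (R :|: (P i :|: P (ordS i))).
  by apply/setP => x; rewrite !inE; move: (subsetP PiR x); set_cases.
rewrite ksepC ksepU ?flower_ksep2 //; apply: lam_ge_strong.
  by apply: strong_sup (flower_strong i); rewrite subsetI PiR subsetUl.
by apply: strong_sup sRc; rewrite setCS subsetIl.
Qed.

Lemma ksep_crossing_petalU R i : strong_ksep R -> strongly_crosses T R (P i) ->
  ksep (R :|: P i).
Proof.
case/and3P => kR _ _ /and3P[_ sPiR sPiRc]; rewrite ksepU ?flower_ksep // lam_ge_strong //.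
  by rewrite setIC.
by apply: strong_sup sPiRc; apply/subsetP => x; rewrite !inE; set_cases.
Qed.

Lemma ksep_crossing_sepU R i X : strong_ksep R -> strongly_crosses T R (P i) ->
  strong_ksep X -> P i \subset X -> ksep (X :|: R).
Proof.
move=> sR crPi /and3P[kX _ sXc] PiX.
have -> : X :|: R = X :|: (R :|: P i).
  by apply/setP => x; rewrite !inE; move: (subsetP PiX x); set_cases.
rewrite ksepU ?ksep_crossing_petalU //; apply: lam_ge_strong.
  by apply: strong_sup (flower_strong i); rewrite subsetI PiX subsetUr.
by apply: strong_sup sXc; rewrite setCS subsetIl.
Qed.

Lemma fcl_petalC_setT R j : weak (P j :&: R) -> weak (P j :&: ~: R) ->
  lam (P j :&: ~: R) <= k -> fcl (~: P j) = setT.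
Proof.
move=> wPjR wPjRc lam_le; rewrite -fclT.
apply: (@fcl_weak_ext2 _ (~: (P j :&: ~: R))); rewrite ?ksepC ?ksep_setT ?setCS ?subsetIl //.
- exact: flower_strongC.
- by apply: weak_sub wPjR; apply/subsetP => x; rewrite !inE; set_cases.
- by rewrite setTD setCK.
Qed.

Lemma displays_weak Y : displays P Y -> weak Y -> Y = set0.
Proof.
move=> dY wY; apply/setP => x; rewrite inE; apply/negP => xY.
have [s xPs] := flower_cover x; case: (displays_side flower_partition s dY) => PsY.
  by case/negP: (flower_strong s); apply: weak_sub wY.
by move/subsetP: PsY => /(_ x xPs); rewrite inE xY.
Qed.

Lemma tequiv_merge_next R i X : strongly_crosses T R (P i) ->
  weak (P (ordS i) :&: R) -> weak (P (ordS i) :&: ~: R) -> fcl (~: P (ordS i)) = setT ->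
  ksep (R :&: (P i :|: P (ordS i))) ->
  kS_sep X -> displays P X -> P i \subset X -> P (ordS i) \subset ~: X ->
  tequiv X (X :|: P (ordS i)).
Proof.
set j := ordS i => /and3P[_ sPiR sPiRc] wPjR wPjRc fclPjc kRij kX dX PiX PjXc.
have sX := kS_sep_strong kX; have /and3P[kX' sX' _] := sX.
have sXjc : strong (~: (X :|: P j)).
  have dXj := displaysU flower_partition dX (displays_petal flower_partition j).
  apply/negP => /(displays_weak (displaysC flower_partition dXj))/setP Xj0.
  have XPjc : X = ~: P j.
    apply/setP => x; move: (Xj0 x) (subsetP PjXc x); rewrite !inE; set_cases.
  by move: (kS_sep_fcl kX); rewrite XPjc fclPjc eqxx.
have kXj : ksep (X :|: P j).
  have -> : X :|: P j = X :|: (P i :|: P j) by rewrite setUA (setUidPl PiX).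
  rewrite ksepU ?flower_ksep2 //.
  have -> : X :&: (P i :|: P j) = P i.
    apply/setP => x; rewrite !inE.
    by move: (subsetP PiX x) (subsetP PjXc x); rewrite !inE; set_cases.
  by rewrite strong_ksep_lam ?flower_strong_ksep.
have kXjR : ksep (X :|: (P j :&: R)).
  have -> : X :|: (P j :&: R) = X :|: (R :&: (P i :|: P j)).
    by apply/setP => x; rewrite !inE; move: (subsetP PiX x); set_cases.
  rewrite ksepU //.
  have -> : X :&: (R :&: (P i :|: P j)) = P i :&: R.
    apply/setP => x; rewrite !inE.
    by move: (subsetP PiX x) (subsetP PjXc x); rewrite !inE; set_cases.
  apply: lam_ge_strong => //; apply: strong_sup sPiRc.
  by apply/subsetP => x; rewrite !inE; set_cases.
apply: (tequiv_weak_ext2 (M := X :|: (P j :&: R))) => //.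
- by rewrite /Defs.strong_ksep kXj sXjc (strong_sup (subsetUl _ _) sX').
- exact: subsetUl.
- exact/setUS/subsetIl.
- by apply: weak_sub wPjR; apply/subsetP => x; rewrite !inE; set_cases.
- by apply: weak_sub wPjRc; apply/subsetP => x; rewrite !inE; set_cases.
Qed.

Lemma strong_crossing_setD R i X : strong_ksep R -> strongly_crosses T R (P i) ->
  kS_sep X -> P i \subset X -> weak (R :\: X) -> strong (~: R :\: X).
Proof.
move=> sR crPi kX PiX wRX; apply/negP => wRcX; have sX := kS_sep_strong kX.
have /and3P[_ sX' _] := sX; have /negP := kS_sep_fcl kX; apply; apply/eqP.
rewrite -fclT; apply: (fcl_weak_ext2 (M := X :|: R)); rewrite ?subsetUl ?subsetT ?ksep_setT //.
- by rewrite setDUl setDv set0U.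
- by rewrite setTD setCU setIC -setDE.
- exact: ksep_crossing_sepU sR crPi sX PiX.
Qed.

Lemma tequiv_petal_of_strong_setD R i X : strong_ksep R -> strongly_crosses T R (P i) ->
  weak (R :\: (P i :|: P (ordS i))) -> weak (~: R :\: (P i :|: P (ordS i))) ->
  kS_sep X -> P i \subset X -> P (ordS i) \subset ~: X -> strong (~: R :\: X) ->
  tequiv X (P i).
Proof.
set j := ordS i => sR crPi wRij wRcij kX PiX PjXc sRcX.
have sX := kS_sep_strong kX; have /and3P[_ sR' _] := sR.
have kM : ksep (X :&: (R :|: P i)).
  rewrite ksepI ?ksep_crossing_petalU //; first by case/and3P: sX.
  have -> : X :|: (R :|: P i) = X :|: R.
    by apply/setP => x; rewrite !inE; move: (subsetP PiX x); set_cases.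
  apply: lam_ge_strong; first exact: strong_sup (subsetUr _ _) sR'.
  by apply: strong_sup sRcX; apply/subsetP => x; rewrite !inE; set_cases.
apply/tequiv_sym/(tequiv_weak_ext2 (M := X :&: (R :|: P i))); rewrite ?flower_strong_ksep //.
- by rewrite subsetI PiX subsetUr.
- exact: subsetIl.
- apply: weak_sub wRij; apply/subsetP => x; rewrite !inE.
  by move: (subsetP PjXc x); rewrite !inE; set_cases.
- apply: weak_sub wRcij; apply/subsetP => x; rewrite !inE.
  by move: (subsetP PjXc x); rewrite !inE; set_cases.
Qed.

Lemma tequiv_petal_of_weak_setD R i : strong_ksep R -> strongly_crosses T R (P i) ->
  weak (R :\: (P i :|: P (ordS i))) -> weak (~: R :\: (P i :|: P (ordS i))) ->
  forall X, kS_sep X -> displays P X -> P i \subset X -> tequiv X (P i).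
Proof.
move=> sR crPi wRij wRcij X kX dX PiX.
have weak_rest Z : weak (Z :\: (P i :|: P (ordS i))) -> P (ordS i) \subset X -> weak (Z :\: X).
  move=> wZ PjX; apply: weak_sub wZ; apply/subsetP => x; rewrite !inE.
  by move: (subsetP PiX x) (subsetP PjX x); set_cases.
case: (displays_side flower_partition (ordS i) dX) => [PjX|PjXc].
  have := strong_crossing_setD sR crPi kX PiX (weak_rest _ wRij PjX).
  by rewrite /Defs.strong weak_rest.
have [sRcX|/negPn wRcX] := boolP (strong (~: R :\: X)).
  exact: tequiv_petal_of_strong_setD sR crPi wRij wRcij kX PiX PjXc sRcX.
apply: (tequiv_petal_of_strong_setD (R := ~: R));
  rewrite ?strong_ksepC ?strongly_crossesC ?setCK //.
rewrite -[R in R :\: X]setCK; apply: (strong_crossing_setD (i := i)) wRcX;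
  by rewrite ?strong_ksepC ?strongly_crossesC.
Qed.

(** * Coarsenings of an S-tight flower *)

Hypothesis P_tight : S_tight lam k T S P.

Lemma tight_coarsening_contra m (Q : 'I_m -> {set E}) :
  (m < n)%N -> kflower lam k T Q -> (forall s, exists t, P s \subset Q t) ->
  (forall X, kS_sep X -> displays P X -> exists2 Y, displays Q Y & tequiv X Y) ->
  False.
Proof.
move=> ltmn Q_flower coarse PleQ; apply: P_tight; exists m, Q; split=> //; split=> // X kX dX.
exists X; last exact/tequiv_refl/kS_sep_strong.
exact: displays_coarsen flower_partition (kflower_partition Q_flower) coarse X dX.
Qed.

Definition petal_pair i (t : 'I_2) : {set E} := if t == ord0 then P i else ~: P i.

Lemma petal_pair_kflower i : kflower lam k T (petal_pair i).
Proof.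
split.
- by case=> [[|[|//]]] ? [[|[|//]]] ? //= _;
    rewrite /petal_pair /= disjoints_subset ?setCK.
- apply/setP => x; rewrite inE; apply/bigcupP.
  by case xPi: (x \in P i); [exists ord0 | exists ord_max]; rewrite /petal_pair //= inE xPi.
- by case=> [[|[|//]]] ?; rewrite /petal_pair /= ?flower_strong ?flower_strongC.
- case=> [[|[|//]]] ?; rewrite /petal_pair /= ?ksepC flower_ksep /=;
    by rewrite ?[~: _ :|: _]setUC setUCr ksep_setT.
Qed.

Lemma tight_petal_pair_contra i :
  ~ (forall X, kS_sep X -> displays P X -> P i \subset X -> tequiv X (P i)).
Proof.
move=> equivPi; have pair_part := kflower_partition (petal_pair_kflower i).
have disp_pair b : displays (petal_pair i) (if b then P i else ~: P i).
  rewrite displaysE //; apply/forallP => -[[|[|//]]] ?;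
    by case: b; rewrite /petal_pair /= ?setCK subxx ?orbT.
apply: (@tight_coarsening_contra 2 (petal_pair i)) => //.
- exact: petal_pair_kflower.
- move=> s; have [->|si] := eqVneq s i; first by exists ord0; rewrite /petal_pair.
  by exists ord_max; rewrite /petal_pair /=; apply: flower_subC; rewrite eq_sym.
move=> X kX dX; case: (displays_side flower_partition i dX) => [PiX|PiXc].
  by exists (P i); [apply: (disp_pair true) | apply: equivPi].
exists (~: P i); first exact: (disp_pair false).
rewrite -[X]setCK; apply/tequivC/equivPi; rewrite ?kS_sepC //.
exact: (displaysC flower_partition dX).
Qed.

Section Merge.
Variable i : 'I_n.
Local Notation j := (ordS i).

(* [lift j] enumerates the petals other than [P j]. *)
Definition merge_petals (t : 'I_n.-1) : {set E} :=
  if lift j t == i then P i :|: P j else P (lift j t).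

Lemma merge_petals_sub t : P (lift j t) \subset merge_petals t.
Proof. by rewrite /merge_petals; case: eqP => [->|_]; rewrite ?subsetUl. Qed.

Lemma merge_petals_coarsen s : exists t, P s \subset merge_petals t.
Proof.
case: (unliftP j s) => [t ->|->]; first by exists t; apply: merge_petals_sub.
case: (unliftP j i) => [t ei|ei]; last by move: (ordS_neq i (ltnW n_ge3)); rewrite -ei eqxx.
by exists t; rewrite /merge_petals -ei eqxx subsetUr.
Qed.

Lemma merge_petals_kflower : kflower lam k T merge_petals.
Proof.
split.
- move=> t t' tt'; have ne : lift j t != lift j t' by rewrite (inj_eq (@lift_inj _ j)).
  have jt := neq_lift j t; have jt' := neq_lift j t'.
  rewrite /merge_petals; case: eqP => [ti|_]; case: eqP => [t'i|_].
  + by move: ne; rewrite ti t'i eqxx.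
  + move: ne; rewrite ti => ne.
    by rewrite disjoints_subset subUset -!disjoints_subset !flower_disjoint.
  + move: ne; rewrite t'i eq_sym => ne.
    by rewrite disjoint_sym disjoints_subset subUset -!disjoints_subset !flower_disjoint.
  + exact: flower_disjoint.
- apply/setP => x; rewrite inE; apply/bigcupP.
  have [s xPs] := flower_cover x; have [t /subsetP Pst] := merge_petals_coarsen s.
  by exists t; rewrite ?Pst.
- by move=> t; apply: strong_sup (merge_petals_sub t) (flower_strong _).
move=> t; apply/andP; split.
  by rewrite /merge_petals; case: eqP => _; rewrite ?flower_ksep2 ?flower_ksep.
rewrite [merge_petals (ordS t)]/merge_petals lift_ordS /merge_petals.
set s := lift j t; case: eqP => [si|si].
  rewrite si eqxx (negbTE (ordSS_neq i n_ge3)).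
  exact: flower_ksep3.
have /negbTE-> : ordS s != j by apply/eqP => /ordS_inj/si.
case: eqP => [Ssi|_]; last exact: flower_ksep2.
by rewrite setUA -Ssi; apply: flower_ksep3.
Qed.

Lemma merge_petals_displays Y : displays P Y ->
  (P i \subset Y) && (P j \subset Y) || (P i \subset ~: Y) && (P j \subset ~: Y) ->
  displays merge_petals Y.
Proof.
move=> dY same_side; rewrite displaysE; last exact: kflower_partition merge_petals_kflower.
apply/forallP => t; rewrite /merge_petals; case: eqP => _; first by rewrite !subUset.
by case: (displays_side flower_partition (lift j t) dY) => ->; rewrite ?orbT.
Qed.

Lemma tight_merge_contra :
  ~ (forall X, kS_sep X -> displays P X -> P i \subset X -> P j \subset ~: X ->
       tequiv X (X :|: P j)).
Proof.
move=> equivXj; apply: (@tight_coarsening_contra n.-1 merge_petals).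
- by rewrite prednK // (leq_trans _ n_ge3).
- exact: merge_petals_kflower.
- exact: merge_petals_coarsen.
move=> X kX dX; have dPj := displays_petal flower_partition j.
have dXc := displaysC flower_partition dX.
case: (displays_side flower_partition i dX) => PiX;
  case: (displays_side flower_partition j dX) => PjX.
- exists X; last exact/tequiv_refl/kS_sep_strong.
  by apply: merge_petals_displays; rewrite ?PiX ?PjX.
- exists (X :|: P j); last exact: equivXj.
  apply: merge_petals_displays; first exact: (displaysU flower_partition dX dPj).
  by rewrite (subset_trans PiX (subsetUl _ _)) subsetUr.
- exists (~: (~: X :|: P j)).
    apply: merge_petals_displays.
      exact: (displaysC flower_partition (displaysU flower_partition dXc dPj)).
    by rewrite setCK (subset_trans PiX (subsetUl _ _)) subsetUr orbT.
  rewrite -[X in tequiv X _]setCK; apply/tequivC/equivXj; rewrite ?kS_sepC ?setCK //.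
- exists X; last exact/tequiv_refl/kS_sep_strong.
  by apply: merge_petals_displays; rewrite ?PiX ?PjX ?orbT.
Qed.

End Merge.

Lemma weak_outside_petals R i : strong_ksep R -> strongly_crosses T R (P i) ->
  weak (P (ordS i) :&: R) -> weak (P (ordS i) :&: ~: R) -> fcl (~: P (ordS i)) = setT ->
  weak (~: R :\: (P i :|: P (ordS i))).
Proof.
move=> sR crPi wPjR wPjRc fclPjc; apply: contraT => sRc_ij; exfalso; have /and3P[kR sR' _] := sR.
apply: (tight_merge_contra (i := i)) => X; apply: (tequiv_merge_next (R := R)) => //.
rewrite ksepI ?flower_ksep2 //; apply: lam_ge_strong; first exact: strong_sup (subsetUl _ _) sR'.
by apply: strong_sup sRc_ij; apply/subsetP => x; rewrite !inE; set_cases.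
Qed.

Lemma petal_strong_ordS R i : kS_sep R -> phi_minimum lam k T P R ->
  petal_strong T R (P i) -> petal_strong T R (P (ordS i)).
Proof.
set j := ordS i => kR minR sPi; apply/negPn/negP.
move=> /(phi_minimum_weak_petal kR minR)/and3P[crj wPjR wPjRc].
have sR := kS_sep_strong kR.
have fclPjc : fcl (~: P j) = setT.
  exact/(fcl_petalC_setT wPjR wPjRc)/ltW/(phi_minimum_lam_lt kR minR crj wPjR).
case/orP: sPi => [|crPi].
  rewrite /crosses negb_and !negbK !setI_eq0 !disjoints_subset setCK.
  case/orP => [PiRc|PiR].
    have := phi_minimum_next_strong (R := ~: R) (i := i); rewrite kS_sepC setCK crossesC.
    by move=> /(_ kR (phi_minimumC minR) PiRc crj); rewrite /Defs.strong wPjR.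
  by have := phi_minimum_next_strong kR minR PiR crj; rewrite /Defs.strong wPjRc.
have wRc_ij := weak_outside_petals sR crPi wPjR wPjRc fclPjc.
have wR_ij : weak (R :\: (P i :|: P j)).
  rewrite -[R in R :\: _]setCK; apply: weak_outside_petals;
    by rewrite ?strong_ksepC ?strongly_crossesC ?setCK.
exact: (tight_petal_pair_contra (tequiv_petal_of_weak_setD sR crPi wR_ij wRc_ij)).
Qed.

End Flower.
End Connectivity.

Theorem lemma5p9 (E : finType) (lam : {set E} -> int) (k : int)
  (T S : {set {set E}}) (n : nat) (P : 'I_n -> {set E}) (R : {set E}) :
  connectivity_system lam ->
  is_tangle lam k T ->
  tree_compatible lam k T S ->
  (3 <= n)%N ->
  kflower lam k T P ->
  S_tight lam k T S P ->
  kS_sep lam k S R ->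
  phi_minimum lam k T P R ->
  ~ conforms lam k T P R ->
  (exists i, petal_strong T R (P i)) ->
  forall i, petal_strong T R (P i).
Proof.
move=> lam_conn T_tangle S_compat n_ge3 P_flower P_tight kR minR _ [i0 sPi0] i.
apply/negPn/negP => nsPi.
have [t /andP[sPt /negP]] :=
  exists_ordS_switch (p := fun s => petal_strong T R (P s)) sPi0 nsPi.
by apply; apply: (petal_strong_ordS lam_conn T_tangle S_compat P_flower n_ge3 P_tight kR minR).
Qed.
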